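(* Let $P,Q\in\mathbb{T}^{r\times s}$ and suppose that every column of $P$ and $Q^\top$ has at least one entry distinct from $-\infty$. Consider the tropical Nash equilibrium complementarity problem: find $(w,z)\in\mathbb{T}^{r+s}\times\mathbb{T}^{r+s}$ with $w\oplus M^-\odot z=q^+$, $w^\top\odot z=-\infty$, $z\neq-\infty$, where $M^-=\begin{psmallmatrix}-\infty & P\\ Q^\top & -\infty\end{psmallmatrix}$ and $q^+$ is the all-$0$ vector of size $r+s$. Then the normalization maps bijectively the projections $z$ of the solutions of this problem to the pairs $(x^*,y^* )\in\Delta^{\mathrm{trop}}_{r-1}\times\Delta^{\mathrm{trop}}_{s-1}$ that satisfy: for all $i\in[r]$, $x^*_i>-\infty$ implies $(P\odot y^* )_i\geq(P\odot y^* )_k$ for all $k\in[r]$; and for all $j\in[s]$, $y^*_j>-\infty$ implies $(Q^\top\odot x^* )_j\geq(Q^\top\odot x^* )_l$ for all $l\in[s]$.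
   Context: $\mathbb{T}=\mathbb{R}\cup\{-\infty\}$ is the max-plus semifield ($\oplus=\max$, $\odot=+$). $\Delta^{\mathrm{trop}}_p=\{z\in\mathbb{T}^{p+1}:\bigoplus_k z_k=0\}$. For $z=(x,y)$ with $x\in\mathbb{T}^r$, $y\in\mathbb{T}^s$ each having an entry distinct from $-\infty$, its normalization is the pair $(\alpha\odot x,\beta\odot y)\in\Delta^{\mathrm{trop}}_{r-1}\times\Delta^{\mathrm{trop}}_{s-1}$ for suitable scalars $\alpha,\beta\in\mathbb{T}$. *)

(* Max-plus semifield T = R ∪ {-oo}, encoded as option R
   (None = -oo), over an ordered field R (realFieldType). *)
From HB Require Import structures.
From mathcomp Require Import all_boot all_order all_algebra.
Set Implicit Arguments. Unset Strict Implicit. Unset Printing Implicit Defensive.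
Import Order.TTheory GRing.Theory Num.Theory.
Local Open Scope ring_scope.

Section Trop.
Variable R : realFieldType.

Definition trop := option R.

Definition tplus (a b : trop) : trop :=
  match a, b with
  | None, _ => b
  | _, None => a
  | Some x, Some y => Some (Num.max x y)
  end.

Definition tmul (a b : trop) : trop :=
  match a, b with
  | Some x, Some y => Some (x + y)
  | _, _ => None
  end.

Definition tle (a b : trop) : bool :=
  match a, b with
  | None, _ => true
  | Some _, None => false
  | Some x, Some y => x <= y
  end.

Definition tsum n (v : 'I_n -> trop) : trop := \big[tplus/None]_(i < n) v i.

Definition tdot n (w z : 'I_n -> trop) : trop :=
  \big[tplus/None]_(i < n) tmul (w i) (z i).

Definition tmv m n (A : 'M[trop]_(m, n)) (v : 'I_n -> trop) : 'I_m -> trop :=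
  fun i => \big[tplus/None]_(j < n) tmul (A i j) (v j).

Definition Mminus r s (P Q : 'M[trop]_(r, s)) : 'M[trop]_(r + s) :=
  \matrix_(i, j)
    match split i, split j with
    | inl a, inr b => P a b
    | inr a, inl b => Q b a
    | _, _ => None
    end.

Definition inDelta n (x : 'I_n -> trop) : Prop := tsum x = Some 0.

Definition normalize n (x : 'I_n -> trop) : {ffun 'I_n -> trop} :=
  let m := match tsum x with Some m => m | None => 0 end in
  [ffun i => tmul (Some (- m)) (x i)].

Definition xpart r s (z : 'I_(r + s) -> trop) : 'I_r -> trop := fun i => z (lshift s i).
Definition ypart r s (z : 'I_(r + s) -> trop) : 'I_s -> trop := fun j => z (rshift r j).

Definition nash_pair r s (P Q : 'M[trop]_(r, s)) (x : 'I_r -> trop) (y : 'I_s -> trop)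
  : Prop :=
  (forall i : 'I_r, x i <> None -> forall k : 'I_r, tle (tmv P y k) (tmv P y i)) /\
  (forall j : 'I_s, y j <> None -> forall l : 'I_s,
       tle (tmv (trmx Q) x l) (tmv (trmx Q) x j)).

Definition tnecp_sol r s (P Q : 'M[trop]_(r, s)) (w z : 'I_(r + s) -> trop) : Prop :=
  (forall i, tplus (w i) (tmv (Mminus P Q) z i) = Some 0) /\
  tdot w z = None /\
  (exists i, z i <> None).

End Trop.

(* Writing z = (x, y), the complementarity problem says exactly that
   P ⊙ y <= 0 with equality on the support of x, and Q^T ⊙ x <= 0 with
   equality on the support of y.  Tropical scaling preserves supports and
   shifts P ⊙ y by a constant, so such an x is supported on the maximal
   entries of P ⊙ y: normalizing gives a Nash pair.  Conversely, a Nash pair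
   (x, y) is lifted back by shifting y by -max (P ⊙ y) and x by
   -max (Q^T ⊙ x), which is finite because P and Q^T have no column
   identically -oo.  The lift is unique: two solutions with the same
   normalization differ by scalars, and the equality P ⊙ y = 0 at a point of
   the (common) support of x forces the scalar to be 0. *)
From HB Require Import structures.
From mathcomp Require Import all_boot all_order all_algebra.
Set Implicit Arguments. Unset Strict Implicit. Unset Printing Implicit Defensive.
Import Order.TTheory GRing.Theory Num.Theory.
Local Open Scope ring_scope.

Section TropicalNash.
Variable R : realFieldType.
Implicit Types (a b c : trop R) (x y : R).

Lemma tplusA : associative (@tplus R).
Proof. by case=> [x|] [y|] [z|] //=; rewrite maxA. Qed.

Lemma tplusC : commutative (@tplus R).
Proof. by case=> [x|] [y|] //=; rewrite maxC. Qed.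

Lemma tplus0t : left_id None (@tplus R).
Proof. by case. Qed.

HB.instance Definition _ :=
  Monoid.isComLaw.Build (trop R) None (@tplus R) tplusA tplusC tplus0t.

Lemma tle_anti a b : tle a b -> tle b a -> a = b.
Proof.
by case: a => [x|]; case: b => [y|] //= h1 h2; congr Some; apply: le_anti; rewrite h1.
Qed.

Lemma tle_None a : tle a None -> a = None.
Proof. by case: a. Qed.

Lemma tplus_lub a b c : tle a c -> tle b c -> tle (tplus a b) c.
Proof. by case: a => [x|]; case: b => [y|]; case: c => [z|] //= h1 h2; rewrite ge_max h1. Qed.

Lemma tplus_ubl a b : tle a (tplus a b).
Proof. by case: a => [x|]; case: b => [y|] //=; rewrite le_max lexx. Qed.

Lemma tplus_ubr a b : tle b (tplus a b).
Proof. by rewrite tplusC tplus_ubl. Qed.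

Lemma tplus_idPl a b : tle b a -> tplus a b = a.
Proof.
move=> le_ba; apply: tle_anti (tplus_ubl a b); apply: tplus_lub _ le_ba.
by case: a => //= x; rewrite lexx.
Qed.

Lemma tmulA a b c : tmul a (tmul b c) = tmul (tmul a b) c.
Proof. by case: a => [x|]; case: b => [y|]; case: c => [z|] //=; rewrite addrA. Qed.

Lemma tmulC a b : tmul a b = tmul b a.
Proof. by case: a => [x|]; case: b => [y|] //=; rewrite addrC. Qed.

Lemma tmul0t a : tmul (Some 0) a = a.
Proof. by case: a => //= x; rewrite add0r. Qed.

Lemma tmulDr x a b :
  tmul (Some x) (tplus a b) = tplus (tmul (Some x) a) (tmul (Some x) b).
Proof. by case: a => [y|]; case: b => [z|] //=; rewrite addr_maxr. Qed.

Lemma tle_tmul2l x a b : tle (tmul (Some x) a) (tmul (Some x) b) = tle a b.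
Proof. by case: a => [y|]; case: b => [z|] //=; rewrite lerD2l. Qed.

Section BigTplus.
Variables (n : nat) (F : 'I_n -> trop R).

Lemma tbig_ub i : tle (F i) (\big[@tplus R/None]_(j < n) F j).
Proof. by rewrite (bigD1 i) //=; apply: tplus_ubl. Qed.

Lemma tbig_lub c : (forall i, tle (F i) c) -> tle (\big[@tplus R/None]_(j < n) F j) c.
Proof. by move=> le_Fc; apply: (big_ind (fun a => tle a c)) => // a b; apply: tplus_lub. Qed.

Lemma tbig_neq_None : \big[@tplus R/None]_(j < n) F j <> None -> exists i, F i <> None.
Proof.
move=> neq_big; case: (pickP (fun i => F i != None)) => [i /eqP|F_None]; first by exists i.
by case: neq_big; apply: big1 => i _; apply/eqP/negbFE/F_None.
Qed.

Lemma tbig_Some i : F i <> None -> exists d, \big[@tplus R/None]_(j < n) F j = Some d.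
Proof.
case E: (\big[@tplus R/None]_(j < n) F j) => [d|] Fi; first by exists d.
by case: Fi; apply: tle_None; rewrite -E tbig_ub.
Qed.

Lemma tmul_tbig x :
  tmul (Some x) (\big[@tplus R/None]_(j < n) F j) =
  \big[@tplus R/None]_(j < n) tmul (Some x) (F j).
Proof. exact: (big_morph _ (tmulDr x)). Qed.

End BigTplus.

Definition tscale n x (v : 'I_n -> trop R) : 'I_n -> trop R :=
  fun i => tmul (Some x) (v i).

Lemma tscaleK n x (v : 'I_n -> trop R) : tscale (- x) (tscale x v) =1 v.
Proof. by move=> i; rewrite /tscale; case: (v i) => //= y; rewrite addKr. Qed.

Lemma tsum_scale n x (v : 'I_n -> trop R) : tsum (tscale x v) = tmul (Some x) (tsum v).
Proof. by rewrite /tsum tmul_tbig. Qed.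

Lemma eq_tsum n (v v' : 'I_n -> trop R) : v =1 v' -> tsum v = tsum v'.
Proof. by move=> eq_v; apply: eq_bigr => i _; rewrite eq_v. Qed.

Lemma eq_tmv m n (A : 'M[trop R]_(m, n)) (v v' : 'I_n -> trop R) :
  v =1 v' -> tmv A v =1 tmv A v'.
Proof. by move=> eq_v i; apply: eq_bigr => j _; rewrite eq_v. Qed.

Lemma tmv_scale m n (A : 'M[trop R]_(m, n)) x (v : 'I_n -> trop R) :
  tmv A (tscale x v) =1 tscale x (tmv A v).
Proof.
by move=> i; rewrite /tscale /tmv tmul_tbig; apply: eq_bigr => j _; rewrite !tmulA (tmulC (A i j)).
Qed.

(* [normalize] is a tropical scaling even when [v] is identically -oo,
   the junk value of the maximum being 0. *)
Lemma normalizeE n (v : 'I_n -> trop R) : normalize v =1 tscale (- odflt 0 (tsum v)) v.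
Proof. by move=> i; rewrite /normalize ffunE. Qed.

Lemma normalizeK n (v : 'I_n -> trop R) : v =1 tscale (odflt 0 (tsum v)) (normalize v).
Proof. by move=> i; rewrite /tscale normalizeE /tscale; case: (v i) => //= y; rewrite addNKr. Qed.

Lemma inDelta_normalize n (v : 'I_n -> trop R) i : v i <> None -> inDelta (normalize v).
Proof.
move=> /tbig_Some[d]; rewrite -/(tsum v) => sum_v.
by rewrite /inDelta (eq_tsum (normalizeE v)) tsum_scale sum_v /= addNr.
Qed.

Lemma inDelta_supp n (v : 'I_n -> trop R) : inDelta v -> exists i, v i <> None.
Proof. by move=> Dv; apply: tbig_neq_None; rewrite -/(tsum v) Dv. Qed.

Lemma normalize_scale_inDelta n x (v : 'I_n -> trop R) (w : {ffun 'I_n -> trop R}) :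
  v =1 tscale x w -> inDelta w -> normalize v = w.
Proof.
move=> eq_v Dw; have sum_v : tsum v = Some (x + 0).
  by rewrite (eq_tsum eq_v) tsum_scale Dw.
by apply/ffunP => i; rewrite normalizeE sum_v addr0 /tscale eq_v; apply: tscaleK.
Qed.

Lemma normalize_eq_scale n (v v' : 'I_n -> trop R) :
  normalize v = normalize v' -> exists e, v' =1 tscale e v.
Proof.
move=> eq_nv; exists (odflt 0 (tsum v') - odflt 0 (tsum v)) => i.
by rewrite normalizeK /tscale -eq_nv normalizeE /tscale tmulA.
Qed.

Section BestReply.
Variables (m n : nat) (A : 'M[trop R]_(m, n)).

Definition best_reply (u : 'I_m -> trop R) (v : 'I_n -> trop R) : Prop :=
  (forall i, tle (tmv A v i) (Some 0)) /\ (forall i, u i <> None -> tmv A v i = Some 0).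

Definition supp_argmax (u : 'I_m -> trop R) (v : 'I_n -> trop R) : Prop :=
  forall i, u i <> None -> forall k, tle (tmv A v k) (tmv A v i).

Lemma best_reply_supp_argmax u v : best_reply u v -> supp_argmax u v.
Proof. by move=> [le_Av0 eq_Av0] i ui k; rewrite (eq_Av0 i ui). Qed.

Lemma supp_argmax_scale x y u v u' v' :
  u' =1 tscale x u -> v' =1 tscale y v -> supp_argmax u v -> supp_argmax u' v'.
Proof.
move=> eq_u eq_v max_uv i u'i k; rewrite !(eq_tmv A eq_v) !tmv_scale tle_tmul2l.
by apply: max_uv; move: u'i; rewrite eq_u /tscale; case: (u i).
Qed.

Lemma supp_argmax_best_reply x d u v u' v' :
  tsum (tmv A v) = Some d -> u' =1 tscale x u -> v' =1 tscale (- d) v ->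
  supp_argmax u v -> best_reply u' v'.
Proof.
move=> sum_Av eq_u eq_v max_uv.
have Av'E i : tmv A v' i = tmul (Some (- d)) (tmv A v i) by rewrite (eq_tmv A eq_v) tmv_scale.
have le_Av i : tle (tmv A v i) (Some d) by rewrite -sum_Av tbig_ub.
split=> i; rewrite Av'E.
  by have := le_Av i; rewrite -(tle_tmul2l (- d)) [tmul _ (Some d)]/= addNr.
move=> u'i; have ui : u i <> None by move: u'i; rewrite eq_u /tscale; case: (u i).
suff -> : tmv A v i = Some d by rewrite /= addNr.
by apply: tle_anti (le_Av i) _; rewrite -sum_Av; apply: tbig_lub; apply: max_uv.
Qed.

Lemma tmv_neq_None v i j : A i j <> None -> v j <> None -> tmv A v i <> None.
Proof.
move=> Aij vj Av_None; have := tbig_ub (fun k => tmul (A i k) (v k)) j.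
by rewrite -/(tmv A v i) Av_None; case: (A i j) Aij => //; case: (v j) vj.
Qed.

Lemma best_reply_nonzero u v i : best_reply u v -> u i <> None -> exists j, v j <> None.
Proof.
move=> [_ eq_Av0] ui; have /tbig_neq_None[j Avj] : tmv A v i <> None by rewrite eq_Av0.
by exists j; move: Avj; case: (v j) => //; case: (A i j).
Qed.

(* The value 0 attained by [A ⊙ v] on the support of [u] pins down the scale of [v]. *)
Lemma best_reply_normalize_inj u u' v v' i :
  best_reply u v -> best_reply u' v' -> u i <> None ->
  normalize u = normalize u' -> normalize v = normalize v' -> v' =1 v.
Proof.
move=> [_ Av0] [_ Av'0] ui /normalize_eq_scale[f eq_u] /normalize_eq_scale[e eq_v].
have u'i : u' i <> None by rewrite eq_u /tscale; case: (u i) ui.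
have e0 : e = 0.
  have := Av'0 i u'i; rewrite (eq_tmv A eq_v) tmv_scale /tscale Av0 //=.
  by rewrite addr0 => -[].
by move=> j; rewrite eq_v e0 /tscale tmul0t.
Qed.

End BestReply.

Lemma tlcp_solvableP n (M : 'M[trop R]_n) (z : 'I_n -> trop R) :
  (exists w, (forall i, tplus (w i) (tmv M z i) = Some 0) /\ tdot w z = None) <->
  best_reply M z z.
Proof.
split=> [[w [eq_wMz dot_wz]]|[le_Mz0 eq_Mz0]].
  split=> i; first by rewrite -(eq_wMz i) tplus_ubr.
  have : tmul (w i) (z i) = None by apply: tle_None; rewrite -dot_wz tbig_ub.
  by move: (eq_wMz i); case: (w i) => // y; case: (z i).
exists (fun i => if z i is None then Some 0 else None); split.
  move=> i; case E: (z i) => [y|]; first by rewrite eq_Mz0 // E.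
  exact: tplus_idPl (le_Mz0 i).
by apply: big1 => i _; case: (z i).
Qed.

Section Bimatrix.
Variables (r s : nat) (P Q : 'M[trop R]_(r, s)).

Lemma split_lshift (i : 'I_r) : split (lshift s i) = inl i.
Proof. exact: (unsplitK (inl i)). Qed.

Lemma split_rshift (j : 'I_s) : split (rshift r j) = inr j.
Proof. exact: (unsplitK (inr j)). Qed.

Lemma tmv_Mminus_lshift (z : 'I_(r + s) -> trop R) i :
  tmv (Mminus P Q) z (lshift s i) = tmv P (ypart z) i.
Proof.
rewrite /tmv big_split_ord /= big1 => [|j _]; last by rewrite mxE !split_lshift.
by rewrite tplus0t; apply: eq_bigr => j _; rewrite mxE split_lshift split_rshift.
Qed.

Lemma tmv_Mminus_rshift (z : 'I_(r + s) -> trop R) j :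
  tmv (Mminus P Q) z (rshift r j) = tmv Q^T (xpart z) j.
Proof.
rewrite /tmv big_split_ord /= [X in tplus _ X]big1 => [|i _]; last by rewrite mxE !split_rshift.
by rewrite tplusC tplus0t; apply: eq_bigr => i _; rewrite !mxE split_lshift split_rshift.
Qed.

Lemma best_reply_Mminus (z : 'I_(r + s) -> trop R) :
  best_reply (Mminus P Q) z z <->
  best_reply P (xpart z) (ypart z) /\ best_reply Q^T (ypart z) (xpart z).
Proof.
split=> [[le_Mz0 eq_Mz0]|[[le_Py0 eq_Py0] [le_Qx0 eq_Qx0]]].
  by split; split=> i; rewrite -?tmv_Mminus_lshift -?tmv_Mminus_rshift; auto.
by split=> k; case: (split_ordP k) => i ->;
  rewrite ?tmv_Mminus_lshift ?tmv_Mminus_rshift; auto.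
Qed.

Lemma tnecp_solP (z : 'I_(r + s) -> trop R) :
  (exists w, tnecp_sol P Q w z) <->
  [/\ best_reply P (xpart z) (ypart z), best_reply Q^T (ypart z) (xpart z),
      exists i, xpart z i <> None & exists j, ypart z j <> None].
Proof.
have solE : (exists w, tnecp_sol P Q w z) <->
             best_reply (Mminus P Q) z z /\ exists k, z k <> None.
  split=> [[w [? [? nz]]]|[/tlcp_solvableP[w [? ?]] nz]]; last by exists w.
  by split=> //; apply/tlcp_solvableP; exists w.
split=> [/solE[/best_reply_Mminus[brP brQ] [k zk]]|[brP brQ [i xi] _]].
  case: (split_ordP k) zk => i -> zk.
  - by have [j yj] := best_reply_nonzero brP zk; split=> //; [exists i|exists j].
  - by have [j xj] := best_reply_nonzero brQ zk; split=> //; [exists j|exists i].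
by apply/solE; split; [apply/best_reply_Mminus | exists (lshift s i)].
Qed.

Definition tjoin (x : 'I_r -> trop R) (y : 'I_s -> trop R) : {ffun 'I_(r + s) -> trop R} :=
  [ffun k => match split k with inl i => x i | inr j => y j end].

Lemma xpart_tjoin (x : 'I_r -> trop R) (y : 'I_s -> trop R) : xpart (tjoin x y) =1 x.
Proof. by move=> i; rewrite /xpart ffunE split_lshift. Qed.

Lemma ypart_tjoin (x : 'I_r -> trop R) (y : 'I_s -> trop R) : ypart (tjoin x y) =1 y.
Proof. by move=> j; rewrite /ypart ffunE split_rshift. Qed.

Lemma eq_ffun_parts (z z' : {ffun 'I_(r + s) -> trop R}) :
  xpart z =1 xpart z' -> ypart z =1 ypart z' -> z = z'.
Proof. by move=> eq_x eq_y; apply/ffunP => k; case: (split_ordP k) => i ->; [exact: eq_x | exact: eq_y]. Qed.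

End Bimatrix.
End TropicalNash.

Unset Implicit Arguments.
Set Strict Implicit.

Theorem proposition6p1 (R : realFieldType) (r s : nat) (P Q : 'M[trop R]_(r, s))
  (hP : forall j : 'I_s, exists i : 'I_r, P i j <> None)
  (hQ : forall i : 'I_r, exists j : 'I_s, Q i j <> None) :
  let sol (z : {ffun 'I_(r + s) -> trop R}) :=
    exists w : 'I_(r + s) -> trop R, tnecp_sol P Q w z in
  let nrm (z : {ffun 'I_(r + s) -> trop R}) :=
    (normalize (xpart z), normalize (ypart z)) in
  (forall z, sol z ->
     inDelta (nrm z).1 /\ inDelta (nrm z).2 /\ nash_pair P Q (nrm z).1 (nrm z).2) /\
  (forall z z', sol z -> sol z' -> nrm z = nrm z' -> z = z') /\
  (forall (x : {ffun 'I_r -> trop R}) (y : {ffun 'I_s -> trop R}),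
     inDelta x -> inDelta y -> nash_pair P Q x y ->
     exists z, sol z /\ nrm z = (x, y)).
Proof.
move=> sol nrm; split; [|split].
- move=> z /tnecp_solP[brP brQ [i xi] [j yj]].
  do !split; [exact: inDelta_normalize xi | exact: inDelta_normalize yj | |].
  + exact: supp_argmax_scale (normalizeE _) (normalizeE _) (best_reply_supp_argmax brP).
  + exact: supp_argmax_scale (normalizeE _) (normalizeE _) (best_reply_supp_argmax brQ).
- move=> z z' /tnecp_solP[brP brQ [i xi] [j yj]] /tnecp_solP[brP' brQ' _ _] [eq_nx eq_ny].
  apply: eq_ffun_parts => k; apply/esym.
  + exact: best_reply_normalize_inj brQ brQ' yj eq_ny eq_nx k.
  + exact: best_reply_normalize_inj brP brP' xi eq_nx eq_ny k.
- move=> x y Dx Dy [max_xy max_yx].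
  have [i xi] := inDelta_supp Dx; have [j yj] := inDelta_supp Dy.
  have [c sum_Qx] : exists c, tsum (tmv Q^T x) = Some c.
    have [j' Qij'] := hQ i; apply: (tbig_Some (i := j')).
    by apply: tmv_neq_None xi; rewrite mxE.
  have [d sum_Py] : exists d, tsum (tmv P y) = Some d.
    by have [i' Pi'j] := hP j; apply: (tbig_Some (i := i')); apply: tmv_neq_None yj.
  set z := tjoin (tscale (- c) x) (tscale (- d) y).
  exists z; split; last first.
    by rewrite /nrm (normalize_scale_inDelta (xpart_tjoin _ _) Dx)
      (normalize_scale_inDelta (ypart_tjoin _ _) Dy).
  apply/tnecp_solP; split.
  + exact: supp_argmax_best_reply sum_Py (xpart_tjoin _ _) (ypart_tjoin _ _) max_xy.
  + exact: supp_argmax_best_reply sum_Qx (ypart_tjoin _ _) (xpart_tjoin _ _) max_yx.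
  + by exists i; rewrite xpart_tjoin /tscale; case: (x i) xi.
  + by exists j; rewrite ypart_tjoin /tscale; case: (y j) yj.
Qed.
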